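(* Let $0<\Delta\le\pi$ and let $f$ be a probability density on $\mathbb R$ whose characteristic function $\Phi(\omega)=\int f(t)e^{i\omega t}dt$ has support in $(-\Delta,\Delta)$ (with $f$ taken as the continuous function $f(t)=\frac1{2\pi}\int\Phi(\omega)e^{-i\omega t}d\omega$). Then the restriction of $f$ to the integers is a well-defined probability distribution on $\mathbb Z$, namely $\mathrm{prob}(k)=f(k)$ for $k\in\mathbb Z$, and its characteristic function $\Phi_{\mathbb Z}(\omega)=\sum_{k\in\mathbb Z}f(k)e^{i\omega k}$ satisfies $\Phi_{\mathbb Z}(\omega)=0$ for $|\omega|\in(\Delta,\pi]$. *)

From Stdlib Require Import Reals ZArith.
From Coquelicot Require Import Coquelicot.
Open Scope R_scope.

Definition cis (x : R) : C := (cos x, sin x).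

Definition is_sumZ {K : AbsRing} {V : NormedModule K} (a : Z -> V) (l : V) : Prop :=
  exists l1 l2 : V,
    is_series (fun n : nat => a (Z.of_nat n)) l1 /\
    is_series (fun n : nat => a (- Z.of_nat (S n))%Z) l2 /\
    l = plus l1 l2.

Definition is_integral_R {V : NormedModule R_AbsRing} (g : R -> V) (l : V) : Prop :=
  is_RInt_gen g (Rbar_locally m_infty) (Rbar_locally p_infty) l.

From Stdlib Require Import Reals ZArith Lia Lra.
From Coquelicot Require Import Coquelicot.
Open Scope R_scope.

(* As [Phi] vanishes outside [(-Delta, Delta)], the inversion formula reads
   [f k = 1/(2 pi) int_{-pi}^{pi} Phi w e^{-i w k} dw], so the Fejer sums
   [sum_{0 <= j, l <= N} f (j - l) e^{i om (j - l)}] equal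
   [1/(2 pi) int_{-pi}^{pi} Phi w K_N (om - w) dw], with [K_N] the Fejer kernel times [N + 1].
   For [om = 0], [|Phi| <= 1] and the continuity of [Phi] at [0], where it is [1], squeeze
   these sums between [(1 - eps) (N + 1) - C_eps] and [N + 1]; since [f >= 0] the symmetric
   partial sums of [f k] increase, hence converge, and their limit must be [1].  For
   [Delta < |om| <= pi] the kernel is only evaluated at distance at least [|om| - Delta] from
   [2 pi Z], where it is bounded uniformly in [N]; so the Cesaro means of the partial sums
   of the absolutely convergent series [sum_k f k e^{i om k}] tend to [0], and hence so
   does its sum. *)

(** * Double sums over a square *)

Lemma sum_n_additive {G H : AbelianMonoid} (phi : G -> H) :
  (forall x y, phi (plus x y) = plus (phi x) (phi y)) ->
  forall g N, sum_n (fun n => phi (g n)) N = phi (sum_n g N).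
Proof.
  intros phi_plus g N. induction N as [|N IH].
  - now rewrite !sum_O.
  - now rewrite !sum_Sn, IH, phi_plus.
Qed.

Section DiffSums.
Context {G : AbelianGroup}.

Lemma sum_n_Sl (g : nat -> G) N : sum_n g (S N) = plus (g O) (sum_n (fun k => g (S k)) N).
Proof. unfold sum_n. rewrite sum_Sn_m by lia. now rewrite sum_n_m_S. Qed.

Lemma sum_n_rev (g : nat -> G) N : sum_n (fun i => g (N - i)%nat) N = sum_n g N.
Proof.
  revert g; induction N as [|N IH]; intro g.
  - now rewrite !sum_O.
  - rewrite sum_Sn, Nat.sub_diag, sum_n_Sl, plus_comm.
    rewrite (sum_n_ext_loc _ (fun i => g (S (N - i)))) by (intros; f_equal; lia).
    now rewrite (IH (fun k => g (S k))).
Qed.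

Definition diff_sum (a : Z -> G) (N : nat) : G :=
  sum_n (fun j => sum_n (fun l => a (Z.of_nat j - Z.of_nat l)%Z) N) N.

Definition pos_sum (a : Z -> G) (m : nat) : G := sum_n (fun n => a (Z.of_nat n)) m.

(* [neg_sum a m] is the sum of the [a (-n)] for [1 <= n <= m]. *)
Definition neg_sum (a : Z -> G) (m : nat) : G :=
  match m with O => zero | S m' => sum_n (fun n => a (- Z.of_nat (S n))%Z) m' end.

Definition sym_sum (a : Z -> G) (m : nat) : G := plus (pos_sum a m) (neg_sum a m).

Lemma diff_sum_S (a : Z -> G) N : diff_sum a (S N) = plus (diff_sum a N) (sym_sum a (S N)).
Proof.
  unfold diff_sum, sym_sum, pos_sum, neg_sum.
  rewrite sum_Sn, (sum_n_ext _ (fun j => plus (sum_n (fun l => a (Z.of_nat j - Z.of_nat l)%Z) N)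
                                              (a (Z.of_nat j - Z.of_nat (S N))%Z)))
    by (intro; now rewrite sum_Sn).
  assert (last_row : sum_n (fun l => a (Z.of_nat (S N) - Z.of_nat l)%Z) (S N)
                     = sum_n (fun n => a (Z.of_nat n)) (S N)).
  { rewrite <- sum_n_rev. apply sum_n_ext_loc. intros n Hn. f_equal. lia. }
  assert (last_col : sum_n (fun j => a (Z.of_nat j - Z.of_nat (S N))%Z) N
                     = sum_n (fun n => a (- Z.of_nat (S n))%Z) N).
  { rewrite <- sum_n_rev. apply sum_n_ext_loc. intros n Hn. f_equal. lia. }
  rewrite sum_n_plus, <- last_row, <- last_col, sum_Sn, <- !plus_assoc.
  f_equal. now rewrite plus_comm, <- plus_assoc.
Qed.

Lemma diff_sum_sym_sum (a : Z -> G) N : diff_sum a N = sum_n (sym_sum a) N.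
Proof.
  induction N as [|N IH].
  - unfold diff_sum, sym_sum, pos_sum, neg_sum. now rewrite !sum_O, plus_zero_r.
  - now rewrite diff_sum_S, IH, sum_Sn.
Qed.

Lemma diff_sum_ext (a b : Z -> G) N : (forall k, a k = b k) -> diff_sum a N = diff_sum b N.
Proof. intro H. apply sum_n_ext; intro j. apply sum_n_ext; intro l. apply H. Qed.

Lemma diff_sum_odd (a : Z -> G) N :
  (forall k, a (- k)%Z = opp (a k)) -> diff_sum a N = opp (diff_sum a N).
Proof.
  intro a_odd. unfold diff_sum at 1. rewrite sum_n_switch. unfold diff_sum.
  rewrite <- (@sum_n_additive G G opp opp_plus). apply sum_n_ext; intro j.
  rewrite <- (@sum_n_additive G G opp opp_plus). apply sum_n_ext; intro l.
  rewrite <- a_odd. f_equal. lia.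
Qed.

End DiffSums.

Lemma diff_sum_additive {G H : AbelianGroup} (phi : G -> H) :
  (forall x y, phi (plus x y) = plus (phi x) (phi y)) ->
  forall a N, diff_sum (fun k => phi (a k)) N = phi (diff_sum a N).
Proof.
  intros phi_plus a N. unfold diff_sum. rewrite <- (sum_n_additive phi phi_plus).
  apply sum_n_ext; intro j. apply (sum_n_additive phi phi_plus).
Qed.

(** * The Fejer kernel *)

Lemma cos_abs x : cos (Rabs x) = cos x.
Proof.
  destruct (Rle_or_lt 0 x).
  - now rewrite Rabs_right by lra.
  - rewrite Rabs_left by lra. apply cos_neg.
Qed.

Lemma cos_lt_1 x : 0 < x <= PI -> cos x < 1.
Proof. intro Hx. rewrite <- cos_0. apply cos_decreasing_1; lra. Qed.

Lemma cos_le_away d x : 0 < d <= PI -> d <= Rabs x <= 2 * PI - d -> cos x <= cos d.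
Proof.
  intros Hd Hx. rewrite <- cos_abs.
  assert (on_half_period : forall z, d <= z <= PI -> cos z <= cos d).
  { intros z Hz. destruct (Req_dec z d) as [->|Hne]; [lra|].
    left. apply cos_decreasing_1; lra. }
  destruct (Rle_or_lt (Rabs x) PI); [apply on_half_period; lra|].
  replace (cos (Rabs x)) with (cos (2 * PI - Rabs x))
    by (rewrite cos_minus, cos_2PI, sin_2PI; ring).
  apply on_half_period; lra.
Qed.

Lemma Rabs_sin_le y : Rabs (sin y) <= Rabs y.
Proof.
  assert (pos : forall z, 0 < z -> Rabs (sin z) <= z).
  { intros z Hz. pose proof (sin_lt_x z Hz). apply Rabs_le. split; [|lra].
    destruct (Rle_or_lt 1 z); [pose proof (SIN_bound z); lra|].
    pose proof PI2_1. assert (0 <= sin z) by (apply sin_ge_0; lra). lra. }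
  destruct (Rtotal_order y 0) as [H|[H|H]].
  - rewrite (Rabs_left y), <- Rabs_Ropp, <- sin_neg by lra. apply pos. lra.
  - subst. rewrite sin_0. lra.
  - rewrite (Rabs_right y) by lra. now apply pos.
Qed.

Lemma one_minus_cos_le x : 1 - cos x <= x * x / 2.
Proof.
  replace x with (2 * (x / 2)) at 1 by field. rewrite cos_2a_sin.
  assert (sin (x / 2) ^ 2 <= (x / 2) ^ 2).
  { rewrite <- (pow2_abs (sin (x / 2))), <- (pow2_abs (x / 2)). apply pow_incr.
    split; [apply Rabs_pos | apply Rabs_sin_le]. }
  simpl in *. nra.
Qed.

Lemma is_RInt_sum_n {V : NormedModule R_AbsRing} (F : nat -> R -> V) (L : nat -> V) a b N :
  (forall n, is_RInt (F n) a b (L n)) ->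
  is_RInt (fun x => sum_n (fun n => F n x) N) a b (sum_n L N).
Proof.
  intro H. induction N as [|N IH].
  - rewrite sum_O. eapply is_RInt_ext; [|apply (H O)]. intros; now rewrite sum_O.
  - rewrite sum_Sn. eapply is_RInt_ext; [|apply is_RInt_plus; [apply IH | apply (H (S N))]].
    intros; now rewrite sum_Sn.
Qed.

Lemma is_RInt_diff_sum {V : NormedModule R_AbsRing} (F : Z -> R -> V) (L : Z -> V) a b N :
  (forall k, is_RInt (F k) a b (L k)) ->
  is_RInt (fun x => diff_sum (fun k => F k x) N) a b (diff_sum L N).
Proof. intro H. do 2 (apply is_RInt_sum_n; intro). apply H. Qed.

(* [fejer N] is [N + 1] times the Fejer kernel of order [N]. *)
Definition fejer (N : nat) (x : R) : R :=
  diff_sum (fun k => cos (IZR k * x)) N.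

Lemma fejer_sqr N x :
  fejer N x = sum_n (fun j => cos (INR j * x)) N ^ 2 + sum_n (fun j => sin (INR j * x)) N ^ 2.
Proof.
  assert (sum_sqr : forall u : nat -> R,
             sum_n u N ^ 2 = sum_n (fun j => sum_n (fun l => u j * u l) N) N).
  { intro u. rewrite <- Rsqr_pow2. unfold Rsqr.
    rewrite <- (sum_n_mult_r (K := R_Ring)). apply sum_n_ext; intro j.
    symmetry. apply (sum_n_mult_l (K := R_Ring)). }
  unfold fejer, diff_sum. rewrite !sum_sqr, <- (sum_n_plus (G := R_AbelianMonoid)).
  apply sum_n_ext; intro j. rewrite <- (sum_n_plus (G := R_AbelianMonoid)).
  apply sum_n_ext; intro l.
  rewrite minus_IZR, <- !INR_IZR_INZ.
  replace ((INR j - INR l) * x) with (INR j * x - INR l * x) by ring.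
  apply cos_minus.
Qed.

(* The partial sums of [e^{i j x}] times [e^{ix} - 1] telescope to [e^{i (N+1) x} - 1]. *)
Lemma cis_sum_telescope N x :
  let A := sum_n (fun j => cos (INR j * x)) N in
  let B := sum_n (fun j => sin (INR j * x)) N in
  A * (cos x - 1) - B * sin x = cos (INR (S N) * x) - 1 /\
  A * sin x + B * (cos x - 1) = sin (INR (S N) * x).
Proof.
  cbv zeta. induction N as [|N IH].
  - rewrite !sum_O. simpl. rewrite Rmult_0_l, cos_0, sin_0, !Rmult_1_l. split; ring.
  - rewrite !sum_Sn. change (@plus R_AbelianMonoid) with Rplus.
    destruct IH as [H1 H2].
    rewrite (S_INR (S N)).
    replace ((INR (S N) + 1) * x) with (INR (S N) * x + x) by ring.
    rewrite cos_plus, sin_plus. split; nra.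
Qed.

Lemma fejer_mul_one_minus_cos N x : fejer N x * (1 - cos x) = 1 - cos (INR (S N) * x).
Proof.
  rewrite fejer_sqr. destruct (cis_sum_telescope N x) as [H1 H2].
  pose proof (sin2_cos2 x). pose proof (sin2_cos2 (INR (S N) * x)).
  unfold Rsqr in *. nra.
Qed.

Lemma fejer_nonneg N x : 0 <= fejer N x.
Proof. rewrite fejer_sqr. nra. Qed.

Lemma fejer_le N x : cos x < 1 -> fejer N x <= 2 / (1 - cos x).
Proof.
  intro Hx. apply Rmult_le_reg_r with (1 - cos x); [lra|].
  rewrite fejer_mul_one_minus_cos. unfold Rdiv. rewrite Rmult_assoc, Rinv_l by lra.
  pose proof (COS_bound (INR (S N) * x)). lra.
Qed.

Lemma fejer_le_away N d x :
  0 < d <= PI -> d <= Rabs x <= 2 * PI - d -> fejer N x <= 2 / (1 - cos d).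
Proof.
  intros Hd Hx. pose proof (cos_lt_1 d Hd). pose proof (cos_le_away d x Hd Hx).
  eapply Rle_trans; [apply fejer_le; lra|].
  apply Rmult_le_compat_l; [lra|]. apply Rinv_le_contravar; lra.
Qed.

Lemma fejer_even N x : fejer N (- x) = fejer N x.
Proof.
  apply diff_sum_ext; intro k. rewrite <- cos_neg. f_equal. ring.
Qed.

Lemma is_RInt_cos_Z (k : Z) :
  is_RInt (fun w => cos (IZR k * w)) (- PI) PI (if Z.eq_dec k 0 then 2 * PI else 0).
Proof.
  destruct (Z.eq_dec k 0) as [->|Hk].
  - apply (is_RInt_ext (fun _ => 1)); [intros; now rewrite Rmult_0_l, cos_0|].
    replace (2 * PI) with (scal (PI - - PI) 1) by (cbv; ring).
    apply (is_RInt_const (V := R_NormedModule)).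
  - apply not_0_IZR in Hk.
    replace 0 with (minus (sin (IZR k * PI) / IZR k) (sin (IZR k * - PI) / IZR k)).
    2:{ rewrite !sin_eq_0_1; [cbv; field; exact Hk| |].
        - exists (- k)%Z. rewrite opp_IZR. ring.
        - exists k. reflexivity. }
    apply (is_RInt_derive (fun w => sin (IZR k * w) / IZR k)).
    + intros x _. auto_derive; [easy|]. field. exact Hk.
    + intros x _. apply (ex_derive_continuous (V := R_NormedModule)). auto_derive. easy.
Qed.

Lemma is_RInt_fejer N : is_RInt (fejer N) (- PI) PI (2 * PI * INR (S N)).
Proof.
  set (c := fun k : Z => if Z.eq_dec k 0 then 2 * PI else 0).
  assert (sym_sum_c : forall m, (sym_sum c m : R) = 2 * PI).
  { assert (c_nonzero : forall k, k <> 0%Z -> c k = 0)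
      by (intros k Hk; unfold c; now destruct Z.eq_dec).
    intro m. unfold sym_sum, pos_sum, neg_sum. change plus with Rplus.
    replace (match m with O => zero | S m' => _ end) with 0.
    - induction m as [|m IH].
      + rewrite sum_O. unfold c. destruct Z.eq_dec; [ring | easy].
      + rewrite sum_Sn, c_nonzero in * by lia. change plus with Rplus in *. lra.
    - destruct m; [reflexivity|].
      rewrite (sum_n_ext _ (fun _ => 0)), sum_n_const; [ring|].
      intro n. apply c_nonzero. lia. }
  replace (2 * PI * INR (S N)) with (diff_sum c N).
  - apply (is_RInt_diff_sum (V := R_NormedModule) (fun k w => cos (IZR k * w))).
    intro k. apply is_RInt_cos_Z.
  - rewrite diff_sum_sym_sum, (sum_n_ext _ _ _ sym_sum_c), sum_n_const. apply Rmult_comm.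
Qed.

Lemma is_integral_R_approx {V : NormedModule R_AbsRing} (g : R -> V) l :
  is_integral_R g l -> forall eps : posreal, exists A B, forall a b, a < A -> B < b ->
    exists z, is_RInt g a b z /\ ball l eps z.
Proof.
  intros H eps.
  assert (Filter (filter_prod (Rbar_locally m_infty) (Rbar_locally p_infty)))
    by (apply filter_prod_filter; apply Rbar_locally_filter).
  destruct (proj1 (filterlimi_locally _ l) H eps) as [Qa Qb [A HA] [B HB] HQ].
  exists A, B. intros a b Ha Hb. exact (HQ a b (HA a Ha) (HB b Hb)).
Qed.

Lemma is_RInt_zero_outside {V : CompleteNormedModule R_AbsRing} (g : R -> V) P a b :
  0 <= P -> (forall w, P <= Rabs w -> g w = zero) -> a <= - P -> P <= b ->
  ex_RInt g (- P) P -> is_RInt g a b (RInt g (- P) P).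
Proof.
  intros HP g_zero Ha Hb Hex.
  assert (zero_on : forall c d, (forall x, c < x < d -> P <= Rabs x) -> c <= d ->
                    is_RInt g c d zero).
  { intros c d Hcd Hle. apply (is_RInt_ext (fun _ => zero)).
    - intros x Hx. rewrite Rmin_left, Rmax_right in Hx by lra. symmetry. now apply g_zero, Hcd.
    - pose proof (is_RInt_const (V := V) c d zero) as K.
      now replace (scal _ _) with (zero (G := V)) in K by (symmetry; exact (scal_zero_r _)). }
  rewrite <- plus_zero_l, <- (plus_zero_r (RInt g (- P) P)).
  apply (is_RInt_Chasles (V := V) _ _ (- P)); [apply zero_on; [|lra]|].
  { intros x Hx. rewrite Rabs_left by lra. lra. }
  apply (is_RInt_Chasles (V := V) _ _ P); [now apply RInt_correct|].
  apply zero_on; [|lra]. intros x Hx. rewrite Rabs_right by lra. lra.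
Qed.

Lemma is_integral_R_compact {V : CompleteNormedModule R_AbsRing} (g : R -> V) l P :
  0 < P -> (forall w, P <= Rabs w -> g w = zero) -> is_integral_R g l -> is_RInt g (- P) P l.
Proof.
  intros HP g_zero Hg.
  assert (Hex : ex_RInt g (- P) P).
  { destruct (is_integral_R_approx g l Hg (mkposreal 1 Rlt_0_1)) as (A & B & HAB).
    destruct (HAB (Rmin A (- P) - 1) (Rmax B P + 1)) as (z & Hz & _).
    { pose proof (Rmin_l A (- P)). lra. }
    { pose proof (Rmax_l B P). lra. }
    pose proof (Rmin_r A (- P)). pose proof (Rmax_r B P).
    apply (ex_RInt_Chasles_2 _ (Rmin A (- P) - 1)); [lra|].
    apply (ex_RInt_Chasles_1 _ _ _ (Rmax B P + 1)); [lra|]. now exists z. }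
  assert (Hgen : is_integral_R g (RInt g (- P) P)).
  { apply filterlimi_locally. intro eps.
    exists (fun a => a <= - P) (fun b => P <= b);
      [exists (- P); intros; lra | exists P; intros; lra|].
    intros a b Ha Hb. exists (RInt g (- P) P).
    split; [apply is_RInt_zero_outside; auto; lra | apply ball_center]. }
  apply is_RInt_gen_unique in Hg, Hgen. rewrite <- Hg, Hgen. now apply RInt_correct.
Qed.

Lemma is_integral_R_norm_le {V : CompleteNormedModule R_AbsRing} (g : R -> V) (h : R -> R) l m :
  is_integral_R g l -> is_integral_R h m -> (forall t, norm (g t) <= h t) -> norm l <= m.
Proof.
  intros Hg Hh Hle. apply (RInt_gen_norm g h l m); [| |exact Hg|exact Hh].
  - exists (fun a => a < 0) (fun b => 0 < b); [now exists 0 | now exists 0|].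
    intros a b Ha Hb. simpl. lra.
  - exists (fun _ => True) (fun _ => True); [now exists 0 | now exists 0|].
    intros a b _ _ x _. apply Hle.
Qed.

Lemma RInt_le_scal (f g : R -> R) a b c :
  a <= b -> ex_RInt f a b -> ex_RInt g a b -> (forall x, a < x < b -> g x <= c * f x) ->
  RInt g a b <= c * RInt f a b.
Proof.
  intros Hab [If Hf] [Ig Hg] Hle.
  rewrite (is_RInt_unique (V := R_CompleteNormedModule) _ _ _ _ Hf),
    (is_RInt_unique (V := R_CompleteNormedModule) _ _ _ _ Hg).
  apply (is_RInt_le g (fun x => c * f x) a b); [easy|easy| |easy].
  apply (is_RInt_scal (V := R_NormedModule)), Hf.
Qed.

Lemma is_RInt_split3 (h : R -> R) a b T I :
  a <= - T -> 0 <= T -> T <= b -> is_RInt h a b I ->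
  ex_RInt h a (- T) /\ ex_RInt h (- T) T /\ ex_RInt h T b /\
  I = RInt h a (- T) + RInt h (- T) T + RInt h T b.
Proof.
  intros Ha HT Hb Hh.
  assert (Hab : ex_RInt h a b) by now exists I.
  assert (E1 : ex_RInt h a (- T))
    by (apply (ex_RInt_Chasles_1 (V := R_CompleteNormedModule) _ _ _ b); [lra|easy]).
  assert (E23 : ex_RInt h (- T) b)
    by (apply (ex_RInt_Chasles_2 (V := R_CompleteNormedModule) _ a); [lra|easy]).
  assert (E2 : ex_RInt h (- T) T)
    by (apply (ex_RInt_Chasles_1 (V := R_CompleteNormedModule) _ _ _ b); [lra|easy]).
  assert (E3 : ex_RInt h T b)
    by (apply (ex_RInt_Chasles_2 (V := R_CompleteNormedModule) _ (- T)); [lra|easy]).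
  repeat split; try assumption.
  rewrite <- (is_RInt_unique (V := R_CompleteNormedModule) _ _ _ _ Hh),
    <- (RInt_Chasles (V := R_CompleteNormedModule) h a (- T) b E1 E23),
    <- (RInt_Chasles (V := R_CompleteNormedModule) h (- T) T b E2 E3).
  cbv [plus]; simpl. ring.
Qed.

Lemma is_RInt_le_tails (f g : R -> R) a b T c If Ig I0 :
  a <= - T -> 0 <= T -> T <= b ->
  is_RInt f a b If -> is_RInt g a b Ig -> is_RInt f (- T) T I0 ->
  (forall t, g t <= 2 * f t) -> (forall t, - T <= t <= T -> g t <= c * f t) ->
  Ig <= 2 * (If - I0) + c * I0.
Proof.
  intros Ha HT Hb Hf Hg H0 tails center.
  destruct (is_RInt_split3 f a b T If) as (F1 & F2 & F3 & ->); try easy.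
  destruct (is_RInt_split3 g a b T Ig) as (G1 & G2 & G3 & ->); try easy.
  rewrite (is_RInt_unique (V := R_CompleteNormedModule) _ _ _ _ H0).
  pose proof (RInt_le_scal f g a (- T) 2 Ha F1 G1 (fun t _ => tails t)).
  pose proof (RInt_le_scal f g (- T) T c ltac:(lra) F2 G2 (fun t Ht => center t ltac:(lra))).
  pose proof (RInt_le_scal f g T b 2 Hb F3 G3 (fun t _ => tails t)).
  rewrite <- (is_RInt_unique (V := R_CompleteNormedModule) _ _ _ _ H0). lra.
Qed.

(** * Symmetric sums over the integers *)

Lemma is_lim_seq_div_succ (K : R) : is_lim_seq (fun N => K / INR (S N)) 0.
Proof.
  replace (Finite 0) with (Rbar_mult K (Rbar_inv p_infty)) by (simpl; f_equal; ring).
  apply is_lim_seq_scal_l, is_lim_seq_inv; [|easy].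
  apply (is_lim_seq_incr_1 INR), is_lim_seq_INR.
Qed.

Lemma le_of_le_sub_div_succ (c s K : R) : (forall N, c - K / INR (S N) <= s) -> c <= s.
Proof.
  intro H. apply (is_lim_seq_le (fun N => c - K / INR (S N)) (fun _ => s) c s H).
  - replace (Finite c) with (Finite (c - 0)) by (f_equal; ring).
    apply is_lim_seq_minus'; [apply is_lim_seq_const|apply is_lim_seq_div_succ].
  - apply is_lim_seq_const.
Qed.

Lemma cesaro_mean (s : nat -> R) (L : R) :
  is_lim_seq s L -> is_lim_seq (fun N => sum_n s N / INR (S N)) L.
Proof.
  intro H. apply is_lim_seq_Reals, Cesaro_1, is_lim_seq_Reals, is_lim_seq_incr_1 in H.
  eapply is_lim_seq_ext; [|exact H]. intro N. simpl pred. now rewrite sum_n_Reals.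
Qed.

Lemma lim_zero_of_bounded_sum (s : nat -> R) (L M : R) :
  is_lim_seq s L -> (forall N, Rabs (sum_n s N) <= M) -> L = 0.
Proof.
  intros Hs bounded.
  assert (mean_to_0 : is_lim_seq (fun N => sum_n s N / INR (S N)) 0).
  { apply (is_lim_seq_le_le (fun N => - M / INR (S N)) _ (fun N => M / INR (S N)));
      [|apply is_lim_seq_div_succ|apply is_lim_seq_div_succ].
    intro N. pose proof (lt_0_INR (S N) ltac:(lia)). specialize (bounded N).
    apply Rabs_le_between in bounded. unfold Rdiv.
    split; apply Rmult_le_compat_r; auto with real; lra. }
  apply cesaro_mean, is_lim_seq_unique in Hs. apply is_lim_seq_unique in mean_to_0.
  rewrite Hs in mean_to_0. now injection mean_to_0.
Qed.

Lemma sum_n_nonneg (u : nat -> R) N : (forall n, 0 <= u n) -> 0 <= sum_n u N.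
Proof.
  intro H. induction N as [|N IH]; [rewrite sum_O; apply H|].
  rewrite sum_Sn. pose proof (H (S N)). change (0 <= sum_n u N + u (S N)). lra.
Qed.

Lemma sum_n_ge_block (s : nat -> R) M N :
  (forall n, 0 <= s n) -> (forall n, s n <= s (S n)) -> INR (S N) * s M <= sum_n s (M + N).
Proof.
  intros s_nonneg s_incr.
  assert (s_mono : forall n k, s n <= s (n + k)%nat).
  { intros n k. induction k as [|k IH]; [rewrite Nat.add_0_r; lra|].
    rewrite Nat.add_succ_r. specialize (s_incr (n + k)%nat). lra. }
  induction N as [|N IH].
  - rewrite Nat.add_0_r, Rmult_1_l. destruct M; [rewrite sum_O; lra|].
    rewrite sum_Sn. pose proof (sum_n_nonneg s M s_nonneg).
    change (s (S M) <= sum_n s M + s (S M)). lra.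
  - rewrite Nat.add_succ_r, sum_Sn, S_INR.
    specialize (s_mono M (S N)). rewrite Nat.add_succ_r in s_mono.
    change (plus (sum_n s (M + N)) (s (S (M + N)))) with (sum_n s (M + N) + s (S (M + N))). lra.
Qed.

Lemma sum_n_le_const (u : nat -> R) c N : (forall n, u n <= c) -> sum_n u N <= INR (S N) * c.
Proof. intro H. rewrite <- sum_n_const. now apply sum_n_m_le. Qed.

Section NonnegSums.

Variable a : Z -> R.
Hypothesis a_nonneg : forall k, 0 <= a k.

Lemma pos_sum_incr m : pos_sum a m <= pos_sum a (S m).
Proof.
  unfold pos_sum. rewrite sum_Sn. pose proof (a_nonneg (Z.of_nat (S m))).
  change plus with Rplus. lra.
Qed.

Lemma neg_sum_incr m : neg_sum a m <= neg_sum a (S m).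
Proof.
  unfold neg_sum. destruct m as [|m]; cbv beta iota.
  - apply sum_n_nonneg. intro. apply a_nonneg.
  - rewrite sum_Sn. pose proof (a_nonneg (- Z.of_nat (S (S m)))%Z). change plus with Rplus. lra.
Qed.

Lemma pos_sum_nonneg m : 0 <= pos_sum a m.
Proof. apply sum_n_nonneg. intro. apply a_nonneg. Qed.

Lemma neg_sum_nonneg m : 0 <= neg_sum a m.
Proof. destruct m; [apply Rle_refl|]. apply sum_n_nonneg. intro. apply a_nonneg. Qed.

Lemma sym_sum_le_of_diff_sum_le l M :
  (forall N, diff_sum a N <= l * INR (S N)) -> sym_sum a M <= l.
Proof.
  intro upper. apply (le_of_le_sub_div_succ _ _ (l * INR M)). intro N.
  assert (sym_nonneg : forall m, 0 <= sym_sum a m).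
  { intro m. pose proof (pos_sum_nonneg m). pose proof (neg_sum_nonneg m).
    unfold sym_sum. change plus with Rplus. lra. }
  assert (sym_incr : forall m, sym_sum a m <= sym_sum a (S m)).
  { intro m. pose proof (pos_sum_incr m). pose proof (neg_sum_incr m).
    unfold sym_sum. change plus with Rplus. lra. }
  pose proof (sum_n_ge_block _ M N sym_nonneg sym_incr) as block.
  specialize (upper (M + N)%nat). rewrite diff_sum_sym_sum in upper.
  pose proof (lt_0_INR (S N) ltac:(lia)).
  apply (Rmult_le_reg_r (INR (S N))); [lra|].
  replace ((sym_sum a M - l * INR M / INR (S N)) * INR (S N))
    with (INR (S N) * sym_sum a M - l * INR M) by (field; apply Rgt_not_eq; lra).
  rewrite S_INR, plus_INR in upper.
  assert (INR (S N) * sym_sum a M <= l * (INR M + INR N + 1))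
    by exact (Rle_trans _ _ _ block upper).
  rewrite S_INR in *. lra.
Qed.

Lemma is_sumZ_of_diff_sum_bounds l :
  (forall N, diff_sum a N <= l * INR (S N)) ->
  (forall eps, 0 < eps ->
     exists K, forall N, (l - eps) * INR (S N) - K <= diff_sum a N) ->
  is_sumZ a l.
Proof.
  intros upper lower.
  pose proof (fun M => sym_sum_le_of_diff_sum_le l M upper) as sym_le.
  assert (pos_le : forall m, pos_sum a m <= l).
  { intro m. specialize (sym_le m). pose proof (neg_sum_nonneg m).
    unfold sym_sum in sym_le. change plus with Rplus in sym_le. lra. }
  assert (neg_le : forall m, neg_sum a m <= l).
  { intro m. specialize (sym_le m). pose proof (pos_sum_nonneg m).
    unfold sym_sum in sym_le. change plus with Rplus in sym_le. lra. }
  destruct (ex_finite_lim_seq_incr _ l pos_sum_incr pos_le) as [l1 Hl1].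
  destruct (ex_finite_lim_seq_incr (fun m => neg_sum a (S m)) l
              (fun m => neg_sum_incr (S m)) (fun m => neg_le (S m))) as [l2 Hl2].
  exists l1, l2. split; [exact Hl1|split; [exact Hl2|]].
  assert (sym_lim : is_lim_seq (sym_sum a) (l1 + l2)).
  { apply is_lim_seq_plus'; [exact Hl1|now apply is_lim_seq_incr_1]. }
  assert (sym_incr : forall m, sym_sum a m <= sym_sum a (S m)).
  { intro m. pose proof (pos_sum_incr m). pose proof (neg_sum_incr m).
    unfold sym_sum. change plus with Rplus. lra. }
  pose proof (is_lim_seq_incr_compare _ _ sym_lim sym_incr) as sym_le_lim.
  change (l = l1 + l2). apply Rle_antisym.
  - apply Rle_plus_epsilon. intros eps Heps. destruct (lower eps Heps) as [K HK].
    enough (l - eps <= l1 + l2) by lra.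
    apply (le_of_le_sub_div_succ _ _ K). intro N.
    pose proof (lt_0_INR (S N) ltac:(lia)).
    pose proof (sum_n_le_const _ _ N sym_le_lim).
    specialize (HK N). rewrite diff_sum_sym_sum in HK.
    assert ((l - eps) * INR (S N) - K <= INR (S N) * (l1 + l2))
      by exact (Rle_trans _ _ _ HK H0).
    apply (Rmult_le_reg_r (INR (S N))); [lra|].
    replace ((l - eps - K / INR (S N)) * INR (S N)) with ((l - eps) * INR (S N) - K)
      by (field; apply Rgt_not_eq; lra).
    lra.
  - pose proof (is_lim_seq_le _ _ _ _ sym_le sym_lim (is_lim_seq_const l)). easy.
Qed.

End NonnegSums.

Notation CR := C_R_NormedModule.
Notation CRG := (ModuleSpace.AbelianGroup R_AbsRing CR).

Lemma norm_C_R (z : C) : norm (V := CR) z = Cmod z.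
Proof.
  change (sqrt (norm (fst z) * (norm (fst z) * 1) + norm (snd z) * (norm (snd z) * 1)) = Cmod z).
  unfold Cmod, norm; simpl; unfold abs; simpl.
  rewrite !Rmult_1_r, <- !Rabs_mult, !Rabs_right by nra. now simpl.
Qed.

Lemma Cmod_cis x : Cmod (cis x) = 1.
Proof.
  unfold Cmod, cis. rewrite <- sqrt_1. f_equal. simpl.
  rewrite !Rmult_1_r. pose proof (sin2_cos2 x). unfold Rsqr in *. lra.
Qed.

Lemma cis_add x y : Cmult (cis x) (cis y) = cis (x + y).
Proof.
  unfold cis, Cmult; simpl. rewrite cos_plus, sin_plus. f_equal; ring.
Qed.

Lemma diff_sum_fst (a : Z -> C) N :
  fst (diff_sum (G := CRG) a N) = diff_sum (fun k => fst (a k)) N.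
Proof. symmetry. now apply (diff_sum_additive (G := CRG) fst). Qed.

Lemma diff_sum_snd (a : Z -> C) N :
  snd (diff_sum (G := CRG) a N) = diff_sum (fun k => snd (a k)) N.
Proof. symmetry. now apply (diff_sum_additive (G := CRG) snd). Qed.

Lemma diff_sum_cis N x : diff_sum (G := CRG) (fun k => cis (IZR k * x)) N = RtoC (fejer N x).
Proof.
  apply injective_projections; rewrite ?diff_sum_fst, ?diff_sum_snd; [reflexivity|]. simpl.
  set (s := diff_sum (fun k => sin (IZR k * x)) N).
  assert (s_odd : s = opp s).
  { apply diff_sum_odd. intro k. rewrite opp_IZR, <- sin_neg. f_equal. ring. }
  change (s = - s) in s_odd. lra.
Qed.

Ltac C_ring :=
  repeat progress (unfold scal, mult, plus, opp, minus, zero, Cmult, RtoC; simpl);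
  match goal with |- ?x = ?y => change (@eq R x y) end; ring.

Lemma is_RInt_Cmult_r (g : R -> C) a b (l c : C) :
  is_RInt (V := CR) g a b l -> is_RInt (V := CR) (fun x => Cmult (g x) c) a b (Cmult l c).
Proof.
  intro H.
  pose proof (is_RInt_fct_extend_fst (U := R_NormedModule) (V := R_NormedModule) g a b l H) as H1.
  pose proof (is_RInt_fct_extend_snd (U := R_NormedModule) (V := R_NormedModule) g a b l H) as H2.
  destruct c as [c1 c2].
  apply (is_RInt_fct_extend_pair (U := R_NormedModule) (V := R_NormedModule)).
  - match goal with |- is_RInt _ _ _ ?v =>
      replace v with (minus (scal c1 (fst l)) (scal c2 (snd l))) by C_ring end.
    eapply is_RInt_ext; [|apply (is_RInt_minus (V := R_NormedModule));
                          apply (is_RInt_scal (V := R_NormedModule)); eassumption].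
    intros; C_ring.
  - match goal with |- is_RInt _ _ _ ?v =>
      replace v with (plus (scal c2 (fst l)) (scal c1 (snd l))) by C_ring end.
    eapply is_RInt_ext; [|apply (is_RInt_plus (V := R_NormedModule));
                          apply (is_RInt_scal (V := R_NormedModule)); eassumption].
    intros; C_ring.
Qed.

Lemma scal_C_R (s : R) (z : C) : scal (V := CR) s z = Cmult (RtoC s) z.
Proof. apply injective_projections; C_ring. Qed.

Lemma Cmod_scal_cis (r x : R) : 0 <= r -> Cmod (scal (V := CR) r (cis x)) = r.
Proof.
  intro Hr. rewrite scal_C_R, Cmod_mult, Cmod_cis, Cmod_R, Rabs_right by lra. ring.
Qed.

Lemma Rabs_fst_le_Cmod (z : C) : Rabs (fst z) <= Cmod z.
Proof. eapply Rle_trans; [apply Rmax_l|apply Rmax_Cmod]. Qed.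

Lemma Rabs_snd_le_Cmod (z : C) : Rabs (snd z) <= Cmod z.
Proof. eapply Rle_trans; [apply Rmax_r|apply Rmax_Cmod]. Qed.

Lemma is_sumZ_sym_sum (a : Z -> R) l : is_sumZ a l -> is_lim_seq (sym_sum a) l.
Proof.
  intros (l1 & l2 & H1 & H2 & ->).
  apply (is_lim_seq_plus' _ _ l1 l2); [exact H1|now apply is_lim_seq_incr_1].
Qed.

Lemma is_sumZ_zero_of_bounded (a : Z -> R) l M :
  is_sumZ a l -> (forall N, Rabs (diff_sum a N) <= M) -> l = 0.
Proof.
  intros Ha bounded. apply (lim_zero_of_bounded_sum _ _ M (is_sumZ_sym_sum a l Ha)).
  intro N. specialize (bounded N). rewrite diff_sum_sym_sum in bounded. exact bounded.
Qed.

Lemma is_series_fst (u : nat -> C) L :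
  is_series (V := CR) u L -> is_series (fun n => fst (u n)) (fst L).
Proof.
  intro H. apply filterlim_locally. intro eps.
  eapply filter_imp; [|exact (proj1 (filterlim_locally _ _) H eps)]. intros n [close _].
  rewrite <- (sum_n_additive (G := AbelianGroup.AbelianMonoid CRG) fst) in close by reflexivity.
  exact close.
Qed.

Lemma is_series_snd (u : nat -> C) L :
  is_series (V := CR) u L -> is_series (fun n => snd (u n)) (snd L).
Proof.
  intro H. apply filterlim_locally. intro eps.
  eapply filter_imp; [|exact (proj1 (filterlim_locally _ _) H eps)]. intros n [_ close].
  rewrite <- (sum_n_additive (G := AbelianGroup.AbelianMonoid CRG) snd) in close by reflexivity.
  exact close.
Qed.

Lemma is_sumZ_C_zero_of_bounded (a : Z -> C) l M :
  is_sumZ (V := CR) a l -> (forall N, Cmod (diff_sum (G := CRG) a N) <= M) -> l = RtoC 0.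
Proof.
  intros (l1 & l2 & H1 & H2 & ->) bounded.
  assert (re : fst l1 + fst l2 = 0).
  { apply (is_sumZ_zero_of_bounded (fun k => fst (a k)) _ M).
    - exists (fst l1), (fst l2). split; [|split]; [now apply is_series_fst..|reflexivity].
    - intro N. rewrite <- diff_sum_fst. eapply Rle_trans; [apply Rabs_fst_le_Cmod|apply bounded]. }
  assert (im : snd l1 + snd l2 = 0).
  { apply (is_sumZ_zero_of_bounded (fun k => snd (a k)) _ M).
    - exists (snd l1), (snd l2). split; [|split]; [now apply is_series_snd..|reflexivity].
    - intro N. rewrite <- diff_sum_snd. eapply Rle_trans; [apply Rabs_snd_le_Cmod|apply bounded]. }
  apply injective_projections; simpl; cbv [plus]; simpl; lra.
Qed.

(** * Restricting a band-limited density to the integers *)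

Section BandLimited.

Variables (Delta : R) (f : R -> R) (Phi : R -> C).
Hypothesis hDelta : 0 < Delta <= PI.
Hypothesis f_nonneg : forall t : R, 0 <= f t.
Hypothesis f_total : is_integral_R f 1.
Hypothesis Phi_def : forall w : R,
  is_integral_R (V := CR) (fun t : R => scal (f t) (cis (w * t))) (Phi w).
Hypothesis Phi_supp : forall w : R, Delta <= Rabs w -> Phi w = RtoC 0.
Hypothesis f_inv : forall t : R,
  is_integral_R (V := CR) (fun w : R => scal (/ (2 * PI)) (Cmult (Phi w) (cis (- (w * t)))))
    (RtoC (f t)).

Lemma f_inversion_on_period t :
  is_RInt (V := CR) (fun w => scal (/ (2 * PI)) (Cmult (Phi w) (cis (- (w * t))))) (- PI) PI
    (RtoC (f t)).
Proof.
  apply (is_integral_R_compact (V := C_R_CompleteNormedModule)); [apply PI_RGT_0| |apply f_inv].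
  intros w Hw. rewrite Phi_supp, Cmult_0_l by lra. apply injective_projections; C_ring.
Qed.

Lemma diff_sum_f_cis_fejer N om :
  is_RInt (V := CR) (fun w => scal (/ (2 * PI)) (Cmult (Phi w) (RtoC (fejer N (om - w)))))
    (- PI) PI (diff_sum (fun k => scal (V := CR) (f (IZR k)) (cis (om * IZR k))) N).
Proof.
  set (F := fun k w =>
         Cmult (scal (/ (2 * PI)) (Cmult (Phi w) (cis (- (w * IZR k))))) (cis (om * IZR k))).
  rewrite (diff_sum_ext (G := CRG) _ (fun k => Cmult (RtoC (f (IZR k))) (cis (om * IZR k))))
    by (intro k; apply scal_C_R).
  eapply is_RInt_ext; [|apply (is_RInt_diff_sum (V := CR) F); intro k;
                        apply is_RInt_Cmult_r, f_inversion_on_period].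
  intros w _. rewrite <- diff_sum_cis.
  set (phi := fun X : C => scal (V := CR) (/ (2 * PI)) (Cmult (Phi w) X)).
  change (diff_sum (fun k => F k w) N
          = phi (diff_sum (G := CRG) (fun k => cis (IZR k * (om - w))) N)).
  rewrite <- (diff_sum_additive (G := CRG) (H := CRG) phi)
    by (intros; apply injective_projections; C_ring).
  (* Re-types both sides in the same group structure on [C], so that [diff_sum_ext] applies. *)
  change (diff_sum (G := CRG) (fun k => F k w) N
          = diff_sum (G := CRG) (fun k => phi (cis (IZR k * (om - w)))) N).
  apply diff_sum_ext; intro k.
  unfold F, phi. rewrite !scal_C_R, <- !Cmult_assoc, cis_add. do 3 f_equal. ring.
Qed.

Lemma Cmod_Phi_le_1 w : Cmod (Phi w) <= 1.
Proof.
  rewrite <- norm_C_R.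
  apply (is_integral_R_norm_le (V := C_R_CompleteNormedModule) _ f _ _ (Phi_def w) f_total).
  intro t. change (norm (V := CR) (scal (V := CR) (f t) (cis (w * t))) <= f t).
  rewrite norm_C_R, Cmod_scal_cis; [lra|apply f_nonneg].
Qed.

Lemma re_Phi_bounds w : - 1 <= fst (Phi w) <= 1.
Proof.
  apply Rabs_le_between. eapply Rle_trans; [apply Rabs_fst_le_Cmod|apply Cmod_Phi_le_1].
Qed.

Lemma diff_sum_f_cis_bounded om N :
  Delta < Rabs om <= PI ->
  Cmod (diff_sum (fun k => scal (V := CR) (f (IZR k)) (cis (om * IZR k))) N)
    <= 2 / (1 - cos (Rabs om - Delta)).
Proof.
  intro Hom. set (d := Rabs om - Delta). set (M := 2 / (1 - cos d)).
  assert (Hd : 0 < d <= PI) by (unfold d; lra).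
  assert (HM : 0 <= M) by (pose proof (cos_lt_1 d Hd); apply Rlt_le, Rdiv_lt_0_compat; lra).
  pose proof PI_RGT_0.
  rewrite <- norm_C_R. replace M with ((PI - - PI) * (/ (2 * PI) * M)) by (field; apply PI_neq0).
  refine (norm_RInt_le_const _ _ _ _ _ _ _ (diff_sum_f_cis_fejer N om)); [lra|].
  assert (inv_2PI_pos : 0 < / (2 * PI)) by (apply Rinv_0_lt_compat; lra).
  intros w _. rewrite norm_C_R, scal_C_R, !Cmod_mult, !Cmod_R, !Rabs_right
    by (apply Rle_ge; lra || apply fejer_nonneg).
  apply Rmult_le_compat_l; [lra|].
  destruct (Rle_or_lt Delta (Rabs w)) as [Hw|Hw].
  - rewrite Phi_supp, Cmod_0, Rmult_0_l by easy. exact HM.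
  - (* [Phi w <> 0] forces [|w| < Delta], which keeps [om - w] away from [2 pi Z]. *)
    assert (Hdist : d <= Rabs (om - w) <= 2 * PI - d).
    { unfold d. pose proof (Rabs_triang_inv om w). pose proof (Rabs_triang om (- w)).
      rewrite Rabs_Ropp in *. unfold Rminus in *. lra. }
    assert (fejer N (om - w) <= M) by now apply fejer_le_away.
    pose proof (Cmod_Phi_le_1 w). pose proof (Cmod_ge_0 (Phi w)).
    pose proof (fejer_nonneg N (om - w)). nra.
Qed.

Lemma diff_sum_f_fejer N :
  is_RInt (fun w => / (2 * PI) * (fst (Phi w) * fejer N w)) (- PI) PI
    (diff_sum (fun k => f (IZR k)) N).
Proof.
  pose proof (is_RInt_fct_extend_fst (U := R_NormedModule) (V := R_NormedModule) _ _ _ _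
                (diff_sum_f_cis_fejer N 0)) as H.
  eapply is_RInt_ext; [|replace (diff_sum _ N) with (fst (diff_sum (G := CRG)
                          (fun k => scal (V := CR) (f (IZR k)) (cis (0 * IZR k))) N)); [exact H|]].
  - intros w _. simpl. rewrite Rminus_0_l, fejer_even. destruct (Phi w). C_ring.
  - rewrite diff_sum_fst. apply diff_sum_ext. intro k. simpl. rewrite Rmult_0_l, cos_0. C_ring.
Qed.

Lemma diff_sum_f_le N : diff_sum (fun k => f (IZR k)) N <= INR (S N).
Proof.
  pose proof PI_RGT_0.
  replace (INR (S N)) with (/ (2 * PI) * (2 * PI * INR (S N))) by (field; apply PI_neq0).
  eapply (is_RInt_le _ _ (- PI) PI); [lra | apply diff_sum_f_fejer
                     | apply (is_RInt_scal (V := R_NormedModule)), is_RInt_fejer |].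
  intros w _. apply Rmult_le_compat_l; [apply Rlt_le, Rinv_0_lt_compat; lra|].
  pose proof (fejer_nonneg N w). pose proof (re_Phi_bounds w). nra.
Qed.

Lemma diff_sum_f_ge eps d N :
  0 <= eps -> 0 < d <= PI -> (forall w, Rabs w < d -> 1 - eps <= fst (Phi w)) ->
  (1 - eps) * INR (S N) - 2 * (2 / (1 - cos d)) <= diff_sum (fun k => f (IZR k)) N.
Proof.
  intros Heps Hd Phi_near_0. set (M := 2 / (1 - cos d)).
  assert (HM : 0 <= M) by (pose proof (cos_lt_1 d Hd); apply Rlt_le, Rdiv_lt_0_compat; lra).
  pose proof PI_RGT_0.
  replace ((1 - eps) * INR (S N) - 2 * M)
    with (/ (2 * PI) * ((1 - eps) * (2 * PI * INR (S N)) - (PI - - PI) * (2 * M)))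
    by (field; apply PI_neq0).
  eapply (is_RInt_le _ _ (- PI) PI); [lra | | apply diff_sum_f_fejer |].
  - apply (is_RInt_scal (V := R_NormedModule)), (is_RInt_minus (V := R_NormedModule)).
    + apply (is_RInt_scal (V := R_NormedModule)), is_RInt_fejer.
    + apply (is_RInt_const (V := R_NormedModule)).
  - intros w Hw. cbv [scal minus plus opp mult]; simpl; cbv [mult]; simpl.
    apply Rmult_le_compat_l; [apply Rlt_le, Rinv_0_lt_compat; lra|].
    pose proof (fejer_nonneg N w).
    destruct (Rlt_or_le (Rabs w) d) as [near|far].
    + pose proof (Phi_near_0 w near). nra.
    + assert (fejer N w <= M).
      { apply fejer_le_away; [easy|]. split; [easy|]. unfold Rabs; destruct Rcase_abs; lra. }
      pose proof (re_Phi_bounds w). nra.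
Qed.

Lemma re_Phi_near_0 eps :
  0 < eps -> exists d, 0 < d <= PI /\ forall w, Rabs w < d -> 1 - eps <= fst (Phi w).
Proof.
  intro Heps. set (eta := eps / 8). assert (Heta : 0 < eta) by (unfold eta; lra).
  destruct (is_integral_R_approx f 1 f_total (mkposreal eta Heta)) as (A & B & f_near).
  set (T := Rmax (Rabs A) (Rabs B) + 1).
  pose proof (Rmax_l (Rabs A) (Rabs B)). pose proof (Rmax_r (Rabs A) (Rabs B)).
  pose proof (Rabs_maj2 A). pose proof (Rle_abs B). pose proof (Rabs_pos A).
  assert (HT : 0 < T /\ - T < A /\ B < T) by (unfold T; lra).
  destruct (f_near (- T) T) as (I0 & HI0 & I0_near); [lra|lra|].
  change (Rabs (I0 - 1) < eta) in I0_near. apply Rabs_def2 in I0_near.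
  pose proof (Rmin_l 1 eta). pose proof (Rmin_r 1 eta). set (m := Rmin 1 eta) in *.
  assert (Hm : 0 < m) by (apply Rmin_pos; lra).
  exists (Rmin PI (m / T)). split; [split; [apply Rmin_pos; [apply PI_RGT_0|]|apply Rmin_l]|].
  { apply Rdiv_lt_0_compat; lra. }
  intros w Hw. pose proof (Rmin_r PI (m / T)).
  assert (HwT : Rabs w * T < m).
  { apply (Rmult_lt_reg_r (/ T)); [apply Rinv_0_lt_compat; lra|].
    rewrite Rmult_assoc, Rinv_r by lra. unfold Rdiv in *. lra. }
  set (c := (w * T) * (w * T) / 2).
  assert (Hc : 0 <= c <= eta / 2 /\ c <= 1 / 2).
  { pose proof (Rabs_pos w). rewrite <- (Rabs_right T) in HwT by lra.
    rewrite <- Rabs_mult in HwT. pose proof (pow2_abs (w * T)) as E. simpl in E.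
    rewrite !Rmult_1_r in E. pose proof (Rabs_pos (w * T)).
    assert (Rabs (w * T) * Rabs (w * T) <= m * m) by nra.
    assert (m * m <= m) by nra. unfold c. nra. }
  destruct (is_integral_R_approx _ _ (Phi_def w) (mkposreal eta Heta)) as (A' & B' & Phi_near).
  set (a := Rmin A' (- T) - 1). set (b := Rmax B' T + 1).
  pose proof (Rmin_l A' (- T)). pose proof (Rmin_r A' (- T)).
  pose proof (Rmax_l B' T). pose proof (Rmax_r B' T).
  destruct (Phi_near a b) as (z' & Hz' & [z'_near _]); [unfold a; lra|unfold b; lra|].
  destruct (f_near a b) as (z & Hz & z_near); [unfold a; lra|unfold b; lra|].
  change (Rabs (fst z' - fst (Phi w)) < eta) in z'_near. apply Rabs_def2 in z'_near.
  change (Rabs (z - 1) < eta) in z_near. apply Rabs_def2 in z_near.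
  assert (Hcos : is_RInt (fun t => f t * cos (w * t)) a b (fst z')).
  { eapply is_RInt_ext;
      [|exact (is_RInt_fct_extend_fst (U := R_NormedModule) (V := R_NormedModule) _ _ _ _ Hz')].
    intros; C_ring. }
  (* [z - fst z'] approximates [int f (1 - cos (w t)) dt]: on [[-T, T]] the weight
     [1 - cos (w t)] is at most [c], and the tails outside carry mass at most [z - I0]. *)
  assert (tails : z - fst z' <= 2 * (z - I0) + c * I0).
  { apply (is_RInt_le_tails f (fun t => f t - f t * cos (w * t)) a b T c);
      [unfold a; lra|lra|unfold b; lra|easy
      |now apply (is_RInt_minus (V := R_NormedModule))|easy| |].
    - intro t. pose proof (f_nonneg t). pose proof (COS_bound (w * t)). nra.
    - intros t Ht. pose proof (f_nonneg t). pose proof (one_minus_cos_le (w * t)).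
      assert ((w * t) * (w * t) <= (w * T) * (w * T)).
      { replace ((w * t) * (w * t)) with ((w * w) * (t * t)) by ring.
        replace ((w * T) * (w * T)) with ((w * w) * (T * T)) by ring.
        apply Rmult_le_compat_l; nra. }
      unfold c. nra. }
  assert (c * I0 <= c * (1 + eta)) by (apply Rmult_le_compat_l; lra).
  assert (c * eta <= eta / 2) by nra.
  unfold eta in *. lra.
Qed.

Lemma is_sumZ_f : is_sumZ (fun k : Z => f (IZR k)) 1.
Proof.
  apply is_sumZ_of_diff_sum_bounds; [intro; apply f_nonneg| |].
  - intro N. rewrite Rmult_1_l. apply diff_sum_f_le.
  - intros eps Heps. destruct (re_Phi_near_0 eps Heps) as (d & Hd & near).
    exists (2 * (2 / (1 - cos d))). intro N. apply diff_sum_f_ge; [lra|easy|easy].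
Qed.

Lemma is_sumZ_f_cis om :
  Delta < Rabs om <= PI ->
  is_sumZ (V := CR) (fun k : Z => scal (f (IZR k)) (cis (om * IZR k))) (RtoC 0).
Proof.
  intro Hom.
  destruct is_sumZ_f as (l1 & l2 & H1 & H2 & _).
  set (a := fun k : Z => scal (V := CR) (f (IZR k)) (cis (om * IZR k))).
  assert (dominated : forall k, norm (V := C_R_CompleteNormedModule) (a k) <= f (IZR k)).
  { intro k. change (norm (V := CR) (a k) <= f (IZR k)).
    rewrite norm_C_R. unfold a. rewrite Cmod_scal_cis; [lra|apply f_nonneg]. }
  destruct (ex_series_le (V := C_R_CompleteNormedModule) (fun n => a (Z.of_nat n)) _
              (fun n => dominated _) (ex_intro _ l1 H1)) as [L1 HL1].
  destruct (ex_series_le (V := C_R_CompleteNormedModule) (fun n => a (- Z.of_nat (S n))%Z) _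
              (fun n => dominated _) (ex_intro _ l2 H2)) as [L2 HL2].
  assert (Ha : is_sumZ (V := CR) a (plus L1 L2)) by (exists L1, L2; auto).
  rewrite (is_sumZ_C_zero_of_bounded a _ _ Ha (fun N => diff_sum_f_cis_bounded om N Hom)) in Ha.
  exact Ha.
Qed.

End BandLimited.

Theorem lemma4 (Delta : R) (f : R -> R) (Phi : R -> C)
  (hDelta : 0 < Delta <= PI)
  (f_nonneg : forall t : R, 0 <= f t)
  (f_total : is_integral_R f 1)
  (Phi_def : forall w : R,
     is_integral_R (V := C_R_NormedModule)
       (fun t : R => scal (f t) (cis (w * t))) (Phi w))
  (Phi_supp : forall w : R, Delta <= Rabs w -> Phi w = RtoC 0)
  (f_inv : forall t : R,
     is_integral_R (V := C_R_NormedModule)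
       (fun w : R => scal (/ (2 * PI)) (Cmult (Phi w) (cis (- (w * t)))))
       (RtoC (f t))) :
  (forall k : Z, 0 <= f (IZR k)) /\
  is_sumZ (fun k : Z => f (IZR k)) 1 /\
  (forall w : R, Delta < Rabs w <= PI ->
     is_sumZ (V := C_R_NormedModule)
       (fun k : Z => scal (f (IZR k)) (cis (w * IZR k))) (RtoC 0)).
Proof.
  split; [intro k; apply f_nonneg|split].
  - eapply is_sumZ_f; eassumption.
  - intros w Hw. eapply is_sumZ_f_cis; eassumption.
Qed.
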